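(* Let $N$ be the surface described in the context, with $l>0$. Then no configuration $(x_1,x_2)$ with $x_1,x_2$ in the interior $\{(t,\theta):0<t<l\}$ of the cylinder $C\subset N$ is midpoint secure in $N$.
   Context: Construction of $N$: let $C=[0,l]\times S^1$ be the flat cylinder of length $l>0$ and radius $1$, with points written $(t,\theta)$, $t\in[0,l]$, $\theta\in\mathbb{R}/2\pi\mathbb{Z}$. Let $H_0$ and $H_l$ be two hemispheres of the round unit sphere, and let $N$ be obtained by gluing the equator of $H_0$ isometrically to $\{0\}\times S^1$ and the equator of $H_l$ isometrically to $\{l\}\times S^1$, so that $N$ is a closed $C^1$ surface with a piecewise smooth Riemannian metric; geodesics of $N$ are the $C^1$ curves that are geodesics in each of the pieces $C,H_0,H_l$. Conventions: a geodesic has positive finite length and is parametrized by $[0,1]$ proportionally to arclength. $G(x,y)$ is the set of geodesics $\gamma$ with $\gamma(0)=x$, $\gamma(1)=y$. A set $B$ is a midpoint blocking set for $G(x,y)$ if $\gamma(1/2)\in B$ for every $\gamma\in G(x,y)$ (endpoints allowed in $B$); $(x,y)$ is midpoint secure if $G(x,y)$ has a finite midpoint blocking set. *)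

From Stdlib Require Import Reals Lra List.
Open Scope R_scope.

(** Points of R^3.  The surface N is realised by its standard isometric
    embedding in R^3 as a "capsule": the cylinder
      C  = { x^2+y^2 = 1, 0 <= z <= l }   ((t,theta) |-> (cos theta, sin theta, t)),
    the lower unit hemisphere H_0 centred at (0,0,0) with z <= 0, and the
    upper unit hemisphere H_l centred at (0,0,l) with z >= l.  The induced
    metric is the glued piecewise smooth metric of N. *)
Record pt := Pt { px : R; py : R; pz : R }.

Inductive piece := PC | PH0 | PHl.

Definition in_piece (l : R) (P : piece) (p : pt) : Prop :=
  match P with
  | PC  => px p ^ 2 + py p ^ 2 = 1 /\ 0 <= pz p <= l
  | PH0 => px p ^ 2 + py p ^ 2 + pz p ^ 2 = 1 /\ pz p <= 0
  | PHl => px p ^ 2 + py p ^ 2 + (pz p - l) ^ 2 = 1 /\ l <= pz p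
  end.

Definition in_N (l : R) (p : pt) : Prop :=
  in_piece l PC p \/ in_piece l PH0 p \/ in_piece l PHl p.

Definition normal (l : R) (P : piece) (p : pt) : pt :=
  match P with
  | PC  => Pt (px p) (py p) 0
  | PH0 => Pt (px p) (py p) (pz p)
  | PHl => Pt (px p) (py p) (pz p - l)
  end.

Definition cyl_pt (t theta : R) : pt := Pt (cos theta) (sin theta) t.

Definition has_deriv_on (f f' : R -> R) (a b : R) : Prop :=
  forall t, a <= t <= b ->
  forall eps, 0 < eps -> exists delta, 0 < delta /\
    forall h, h <> 0 -> Rabs h < delta -> a <= t + h <= b ->
      Rabs ((f (t + h) - f t) / h - f' t) < eps.

Definition cont_on (f : R -> R) (a b : R) : Prop :=
  forall t, a <= t <= b ->
  forall eps, 0 < eps -> exists delta, 0 < delta /\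
    forall s, a <= s <= b -> Rabs (s - t) < delta -> Rabs (f s - f t) < eps.

Definition comps : list (pt -> R) := px :: py :: pz :: nil.

(** A geodesic of N: a C^1 map g : [0,1] -> N (only values on [0,1] matter),
    with constant positive speed L (= its length, so it is parametrised
    proportionally to arclength), which is a geodesic of each piece P on
    every open time interval during which it stays in P: there it is C^2
    and its acceleration is normal to P (vanishing covariant acceleration). *)
Definition is_geodesic (l : R) (g : R -> pt) : Prop :=
  (forall t, 0 <= t <= 1 -> in_N l (g t)) /\
  exists g' : R -> pt,
    (forall c, In c comps ->
       has_deriv_on (fun t => c (g t)) (fun t => c (g' t)) 0 1 /\
       cont_on (fun t => c (g' t)) 0 1) /\
    (exists L, 0 < L /\
       forall t, 0 <= t <= 1 ->
         px (g' t) ^ 2 + py (g' t) ^ 2 + pz (g' t) ^ 2 = L ^ 2) /\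
    (forall (P : piece) a b, 0 <= a -> a < b -> b <= 1 ->
       (forall t, a < t < b -> in_piece l P (g t)) ->
       forall t, a < t < b ->
         exists acc : pt,
           (forall c, In c comps ->
              derivable_pt_lim (fun s => c (g' s)) t (c acc)) /\
           exists lam : R,
             forall c, In c comps -> c acc = lam * c (normal l P (g t))).

Definition in_G (l : R) (x y : pt) (g : R -> pt) : Prop :=
  is_geodesic l g /\ g 0 = x /\ g 1 = y.

Definition midpoint_blocking (l : R) (x y : pt) (B : list pt) : Prop :=
  forall g, in_G l x y g -> In (g (1/2)) B.

Definition midpoint_secure (l : R) (x y : pt) : Prop :=
  exists B : list pt, midpoint_blocking l x y B.

From Stdlib Require Import Reals Lra Lia List FinFun.
Open Scope R_scope.

(** Two points [x1 = (t1, th1)] and [x2 = (t2, th2)] inside the cylinder are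
    joined by infinitely many geodesics of [N] whose midpoints are pairwise
    distinct, so no finite set blocks all midpoints.

    The geodesics are "capsule paths": descend the cylinder along a helix of
    vertical speed [V] and angular speed [W] down to the equator of [H_0],
    cross [H_0] along a great half-circle at speed [L] (it leaves the equator
    at the antipodal point, tangentially to a helix of the same slope), and
    climb the cylinder along a helix to [x2].  With [W = m V], [L = q V],
    [q = sqrt (1 + m^2)] and [V] fixed by the unit time budget, the path is a
    geodesic of [N]; it ends at [x2] exactly when the winding [m (t1 + t2)]
    equals [th2 - th1 - PI] modulo [2 PI], which gives one admissible slope
    [m_k] for each winding number [k].  For large [k] the midpoint height is
    [C - D / q_k] with [D > 0], strictly increasing in [k]. *)

Lemma derivable_pt_lim_local (f g : R -> R) (x l r : R) : 0 < r ->
  (forall y, Rabs (y - x) < r -> g y = f y) ->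
  derivable_pt_lim f x l -> derivable_pt_lim g x l.
Proof.
  intros Hr Hloc Hd eps Heps.
  destruct (Hd eps Heps) as [d Hdd].
  assert (Hm : 0 < Rmin d r) by (apply Rmin_glb_lt; [apply cond_pos | lra]).
  exists (mkposreal _ Hm); intros h Hh Hlt; simpl in Hlt.
  rewrite (Hloc (x + h)), (Hloc x).
  - apply Hdd; [exact Hh | apply (Rlt_le_trans _ _ _ Hlt), Rmin_l].
  - rewrite Rminus_diag, Rabs_R0; lra.
  - replace (x + h - x) with h by ring. apply (Rlt_le_trans _ _ _ Hlt), Rmin_r.
Qed.

Definition cont_at (f : R -> R) (x : R) : Prop :=
  forall eps, 0 < eps -> exists d, 0 < d /\
    forall y, Rabs (y - x) < d -> Rabs (f y - f x) < eps.

Lemma derivable_cont_at (f : R -> R) (x l : R) :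
  derivable_pt_lim f x l -> cont_at f x.
Proof.
  intros Hd eps Heps.
  assert (Hc : continuity_pt f x) by (apply derivable_continuous_pt; exists l; exact Hd).
  destruct (Hc eps Heps) as [d [Hd0 Hdd]].
  exists d; split; [exact Hd0 |]; intros y Hy.
  destruct (Req_dec y x) as [-> | Hne].
  - rewrite Rminus_diag, Rabs_R0; exact Heps.
  - apply (Hdd y); split; [split; [exact I | auto] | exact Hy].
Qed.

Lemma cont_at_cont_on (f : R -> R) : (forall x, cont_at f x) -> cont_on f 0 1.
Proof.
  intros Hf t _ eps Heps.
  destruct (Hf t eps Heps) as [d [Hd Hdd]]; exists d; split; auto.
Qed.

Lemma derivable_has_deriv_on (f f' : R -> R) :
  (forall x, derivable_pt_lim f x (f' x)) -> has_deriv_on f f' 0 1.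
Proof.
  intros Hf t _ eps Heps.
  destruct (Hf t eps Heps) as [d Hd].
  exists d; split; [apply cond_pos | intros h Hh Hlt _; apply Hd; auto].
Qed.

Definition glue {A : Type} (a : R) (f g : R -> A) (s : R) : A :=
  if Rle_dec s a then f s else g s.

Lemma glue_le {A : Type} (a : R) (f g : R -> A) (s : R) : s <= a -> glue a f g s = f s.
Proof. intros Hs; unfold glue; destruct (Rle_dec s a); [reflexivity | lra]. Qed.

Lemma glue_gt {A : Type} (a : R) (f g : R -> A) (s : R) : a < s -> glue a f g s = g s.
Proof. intros Hs; unfold glue; destruct (Rle_dec s a); [lra | reflexivity]. Qed.

Lemma glue_derivable_lt (a : R) (f g : R -> R) (x l : R) :
  x < a -> derivable_pt_lim f x l -> derivable_pt_lim (glue a f g) x l.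
Proof.
  intros Hx. apply (derivable_pt_lim_local f _ x l (a - x)); [lra |].
  intros y Hy; apply Rabs_def2 in Hy; apply glue_le; lra.
Qed.

Lemma glue_derivable_gt (a : R) (f g : R -> R) (x l : R) :
  a < x -> derivable_pt_lim g x l -> derivable_pt_lim (glue a f g) x l.
Proof.
  intros Hx. apply (derivable_pt_lim_local g _ x l (x - a)); [lra |].
  intros y Hy; apply Rabs_def2 in Hy; apply glue_gt; lra.
Qed.

Lemma glue_derivable (a : R) (f g f' g' : R -> R) :
  (forall x, derivable_pt_lim f x (f' x)) ->
  (forall x, derivable_pt_lim g x (g' x)) ->
  f a = g a -> f' a = g' a ->
  forall x, derivable_pt_lim (glue a f g) x (glue a f' g' x).
Proof.
  intros Hf Hg Ha Ha' x.
  destruct (Rtotal_order x a) as [Hx | [-> | Hx]].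
  - rewrite glue_le by lra. apply glue_derivable_lt; auto.
  - rewrite glue_le by lra. intros eps Heps.
    destruct (Hf a eps Heps) as [d1 H1]; destruct (Hg a eps Heps) as [d2 H2].
    assert (Hm : 0 < Rmin d1 d2) by (apply Rmin_glb_lt; apply cond_pos).
    exists (mkposreal _ Hm); intros h Hh Hlt; simpl in Hlt.
    rewrite (glue_le a f g a) by lra.
    destruct (Rle_dec (a + h) a) as [Hle | Hgt].
    + rewrite glue_le by exact Hle.
      apply H1; [exact Hh | apply (Rlt_le_trans _ _ _ Hlt), Rmin_l].
    + rewrite glue_gt, Ha, Ha' by lra.
      apply H2; [exact Hh | apply (Rlt_le_trans _ _ _ Hlt), Rmin_r].
  - rewrite glue_gt by lra. apply glue_derivable_gt; auto.
Qed.

Lemma glue_cont (a : R) (f g : R -> R) :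
  (forall x, cont_at f x) -> (forall x, cont_at g x) -> f a = g a ->
  forall x, cont_at (glue a f g) x.
Proof.
  intros Hf Hg Ha x eps Heps.
  destruct (Hf x eps Heps) as [d1 [Hd1 H1]]; destruct (Hg x eps Heps) as [d2 [Hd2 H2]].
  destruct (Rtotal_order x a) as [Hx | [-> | Hx]].
  - exists (Rmin d1 (a - x)); split; [apply Rmin_glb_lt; lra |]; intros y Hy.
    pose proof (Rlt_le_trans _ _ _ Hy (Rmin_l _ _)) as Hy1.
    pose proof (Rlt_le_trans _ _ _ Hy (Rmin_r _ _)) as Hy2; apply Rabs_def2 in Hy2.
    rewrite !glue_le by lra; auto.
  - exists (Rmin d1 d2); split; [apply Rmin_glb_lt; lra |]; intros y Hy.
    rewrite (glue_le a f g a) by lra.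
    destruct (Rle_dec y a).
    + rewrite glue_le by lra. apply H1, (Rlt_le_trans _ _ _ Hy), Rmin_l.
    + rewrite glue_gt, Ha by lra. apply H2, (Rlt_le_trans _ _ _ Hy), Rmin_r.
  - exists (Rmin d2 (x - a)); split; [apply Rmin_glb_lt; lra |]; intros y Hy.
    pose proof (Rlt_le_trans _ _ _ Hy (Rmin_l _ _)) as Hy1.
    pose proof (Rlt_le_trans _ _ _ Hy (Rmin_r _ _)) as Hy2; apply Rabs_def2 in Hy2.
    rewrite !glue_gt by lra; auto.
Qed.

Definition path3 {A : Type} (a b : R) (f1 f2 f3 : R -> A) : R -> A :=
  glue a f1 (glue b f2 f3).

Lemma path3_first {A : Type} (a b : R) (f1 f2 f3 : R -> A) (s : R) :
  s <= a -> path3 a b f1 f2 f3 s = f1 s.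
Proof. apply glue_le. Qed.

Lemma path3_middle {A : Type} (a b : R) (f1 f2 f3 : R -> A) (s : R) :
  a < s -> s <= b -> path3 a b f1 f2 f3 s = f2 s.
Proof. intros; unfold path3; rewrite glue_gt, glue_le; auto. Qed.

Lemma path3_last {A : Type} (a b : R) (f1 f2 f3 : R -> A) (s : R) :
  a < b -> b < s -> path3 a b f1 f2 f3 s = f3 s.
Proof. intros; unfold path3; rewrite !glue_gt; auto; lra. Qed.

Section Path3Regularity.
Variables (a b : R) (f1 f2 f3 f1' f2' f3' : R -> R).
Hypothesis Hab : a < b.
Hypothesis Hd1 : forall x, derivable_pt_lim f1 x (f1' x).
Hypothesis Hd2 : forall x, derivable_pt_lim f2 x (f2' x).
Hypothesis Hd3 : forall x, derivable_pt_lim f3 x (f3' x).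

Lemma path3_derivable :
  f1 a = f2 a -> f1' a = f2' a -> f2 b = f3 b -> f2' b = f3' b ->
  forall x, derivable_pt_lim (path3 a b f1 f2 f3) x (path3 a b f1' f2' f3' x).
Proof.
  intros E1 E1' E2 E2'. apply glue_derivable; auto.
  - apply glue_derivable; auto.
  - rewrite glue_le by lra; exact E1.
  - rewrite glue_le by lra; exact E1'.
Qed.

Lemma path3_derivable_off (x : R) : x <> a -> x <> b ->
  derivable_pt_lim (path3 a b f1 f2 f3) x (path3 a b f1' f2' f3' x).
Proof.
  intros Ha Hb. unfold path3.
  destruct (Rlt_or_le x a) as [Hxa | Hxa].
  - rewrite glue_le by lra. apply glue_derivable_lt; auto.
  - rewrite glue_gt by lra. apply glue_derivable_gt; [lra |].
    destruct (Rlt_or_le x b) as [Hxb | Hxb].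
    + rewrite glue_le by lra. apply glue_derivable_lt; auto.
    + rewrite glue_gt by lra. apply glue_derivable_gt; auto; lra.
Qed.

End Path3Regularity.

Lemma path3_cont (a b : R) (f1 f2 f3 : R -> R) : a < b ->
  (forall x, cont_at f1 x) -> (forall x, cont_at f2 x) -> (forall x, cont_at f3 x) ->
  f1 a = f2 a -> f2 b = f3 b -> forall x, cont_at (path3 a b f1 f2 f3) x.
Proof.
  intros Hab H1 H2 H3 E1 E2. apply glue_cont; auto.
  - apply glue_cont; auto.
  - rewrite glue_le by lra; exact E1.
Qed.

(** * Waves: the coordinate functions of helices and great circles *)

Record wave := Wave { wcos : R; wsin : R; wconst : R; wlin : R; wphase : R; wfreq : R }.

Definition weval (w : wave) (s : R) : R :=
  wcos w * cos (wphase w + wfreq w * s) + wsin w * sin (wphase w + wfreq w * s)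
  + wconst w + wlin w * s.

Definition wderiv (w : wave) : wave :=
  Wave (wfreq w * wsin w) (- (wfreq w * wcos w)) (wlin w) 0 (wphase w) (wfreq w).

Lemma weval_derivable (w : wave) (x : R) :
  derivable_pt_lim (weval w) x (weval (wderiv w) x).
Proof.
  destruct w as [p q r d c k]; unfold weval, wderiv; simpl.
  assert (Harg : derivable_pt_lim (fun s => c + k * s) x k).
  { assert (H : derivable_pt_lim (fun s => c + k * s) x (0 + k * 1)).
    { apply (derivable_pt_lim_plus (fun _ => c) (fun s => k * s)).
      - apply derivable_pt_lim_const.
      - apply (derivable_pt_lim_scal id), derivable_pt_lim_id. }
    rewrite Rplus_0_l, Rmult_1_r in H; exact H. }
  assert (Hcos := derivable_pt_lim_comp _ cos x k _ Harg (derivable_pt_lim_cos _)).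
  assert (Hsin := derivable_pt_lim_comp _ sin x k _ Harg (derivable_pt_lim_sin _)).
  replace (k * q * cos (c + k * x) + - (k * p) * sin (c + k * x) + d + 0 * x)
    with (p * (- sin (c + k * x) * k) + q * (cos (c + k * x) * k) + 0 + d * 1) by ring.
  apply derivable_pt_lim_plus; [apply derivable_pt_lim_plus; [apply derivable_pt_lim_plus |] |].
  - apply (derivable_pt_lim_scal (fun s => cos (c + k * s))), Hcos.
  - apply (derivable_pt_lim_scal (fun s => sin (c + k * s))), Hsin.
  - apply derivable_pt_lim_const.
  - apply (derivable_pt_lim_scal id), derivable_pt_lim_id.
Qed.

Lemma weval_cont (w : wave) (x : R) : cont_at (weval w) x.
Proof. exact (derivable_cont_at _ _ _ (weval_derivable w x)). Qed.

Record wcurve := WC { wx : wave; wy : wave; wz : wave }.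

Definition ceval (g : wcurve) (s : R) : pt :=
  Pt (weval (wx g) s) (weval (wy g) s) (weval (wz g) s).

Definition cvel (g : wcurve) : wcurve :=
  WC (wderiv (wx g)) (wderiv (wy g)) (wderiv (wz g)).

Definition wpath (a b : R) (g1 g2 g3 : wcurve) (s : R) : pt :=
  Pt (path3 a b (weval (wx g1)) (weval (wx g2)) (weval (wx g3)) s)
     (path3 a b (weval (wy g1)) (weval (wy g2)) (weval (wy g3)) s)
     (path3 a b (weval (wz g1)) (weval (wz g2)) (weval (wz g3)) s).

Lemma wpath_first (a b : R) (g1 g2 g3 : wcurve) (s : R) :
  s <= a -> wpath a b g1 g2 g3 s = ceval g1 s.
Proof. intros; unfold wpath, ceval; rewrite !path3_first; auto. Qed.

Lemma wpath_middle (a b : R) (g1 g2 g3 : wcurve) (s : R) :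
  a < s -> s <= b -> wpath a b g1 g2 g3 s = ceval g2 s.
Proof. intros; unfold wpath, ceval; rewrite !path3_middle; auto. Qed.

Lemma wpath_last (a b : R) (g1 g2 g3 : wcurve) (s : R) :
  a < b -> b < s -> wpath a b g1 g2 g3 s = ceval g3 s.
Proof. intros; unfold wpath, ceval; rewrite !path3_last; auto. Qed.

Section WavePathRegularity.
Variables (a b : R) (g1 g2 g3 : wcurve).
Hypothesis Hab : a < b.

Lemma wpath_C1 :
  ceval g1 a = ceval g2 a -> ceval (cvel g1) a = ceval (cvel g2) a ->
  ceval g2 b = ceval g3 b -> ceval (cvel g2) b = ceval (cvel g3) b ->
  forall c, In c comps ->
    (forall x, derivable_pt_lim (fun s => c (wpath a b g1 g2 g3 s)) x
                 (c (wpath a b (cvel g1) (cvel g2) (cvel g3) x))) /\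
    (forall x, cont_at (fun s => c (wpath a b (cvel g1) (cvel g2) (cvel g3) s)) x).
Proof.
  unfold ceval; cbn [wx wy wz cvel].
  intros E1 E1' E2 E2'.
  injection E1 as E1x E1y E1z; injection E1' as E1x' E1y' E1z'.
  injection E2 as E2x E2y E2z; injection E2' as E2x' E2y' E2z'.
  intros proj [<- | [<- | [<- | []]]]; unfold wpath; cbn [px py pz wx wy wz cvel]; split;
    solve [ apply path3_derivable; auto using weval_derivable
          | apply path3_cont; auto using weval_cont ].
Qed.

Lemma wpath_accel (x : R) : x <> a -> x <> b ->
  forall c, In c comps ->
    derivable_pt_lim (fun s => c (wpath a b (cvel g1) (cvel g2) (cvel g3) s)) x
      (c (wpath a b (cvel (cvel g1)) (cvel (cvel g2)) (cvel (cvel g3)) x)).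
Proof.
  intros Ha Hb proj [<- | [<- | [<- | []]]]; unfold wpath; cbn [px py pz wx wy wz cvel];
    apply path3_derivable_off; auto using weval_derivable.
Qed.

End WavePathRegularity.

Lemma piece_of_cylinder_interior (l : R) (P : piece) (p : pt) :
  0 < pz p < l -> in_piece l P p -> P = PC.
Proof. destruct P; simpl; intros; [reflexivity | lra | lra]. Qed.

Lemma piece_below_equator (l : R) (P : piece) (p : pt) :
  0 < l -> pz p < 0 -> in_piece l P p -> P = PH0.
Proof. destruct P; simpl; intros; [lra | reflexivity | lra]. Qed.

Lemma straddle (a b u v w : R) : u < v < w -> a < v < b ->
  exists t t', a < t < b /\ u < t < v /\ a < t' < b /\ v < t' < w.
Proof.
  intros Huvw Hab.
  exists ((Rmax a u + v) / 2), ((v + Rmin b w) / 2).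
  pose proof (Rmax_l a u); pose proof (Rmax_r a u); pose proof (Rmax_lub_lt a u v).
  pose proof (Rmin_l b w); pose proof (Rmin_r b w); pose proof (Rmin_glb_lt b w v).
  repeat split; lra.
Qed.

(** * The capsule path *)

Lemma cos_sin_sq (u : R) : cos u * cos u + sin u * sin u = 1.
Proof. rewrite <- (sin2_cos2 u); unfold Rsqr; ring. Qed.

Section CapsulePath.
Variables (th1 t1 W V L : R).
Hypotheses (HV : 0 < V) (HL : 0 < L).

(** Leave [(t1, th1)] along the helix of vertical speed [V] and angular speed [W],
    reach the equator [z = 0] at time [t_in], follow a great half-circle of [H_0]
    at speed [L] until [t_out], then climb the cylinder along a helix again. *)
Definition t_in : R := t1 / V.
Definition t_out : R := t_in + PI / L.
Definition phi_in : R := th1 + W * t_in.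
Definition phi_out : R := phi_in + PI - W * t_out.

Definition helix (c z0 vz : R) : wcurve :=
  WC (Wave 1 0 0 0 c W) (Wave 0 1 0 0 c W) (Wave 0 0 z0 vz c W).

Definition descent : wcurve := helix th1 t1 (- V).
Definition cap : wcurve :=
  WC (Wave (cos phi_in) (- (W / L) * sin phi_in) 0 0 (- (L * t_in)) L)
     (Wave (sin phi_in) (W / L * cos phi_in) 0 0 (- (L * t_in)) L)
     (Wave 0 (- (V / L)) 0 0 (- (L * t_in)) L).
Definition ascent : wcurve := helix phi_out (- (V * t_out)) V.

Definition capsule_path : R -> pt := wpath t_in t_out descent cap ascent.
Definition capsule_vel : R -> pt := wpath t_in t_out (cvel descent) (cvel cap) (cvel ascent).

Lemma t_in_lt_t_out : t_in < t_out.
Proof. unfold t_out. assert (0 < PI / L) by (apply Rdiv_lt_0_compat; [apply PI_RGT_0 | exact HL]). lra. Qed.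

Lemma cap_angle_in (s : R) : - (L * t_in) + L * s = L * (s - t_in).
Proof. ring. Qed.

Lemma cap_angle_out : L * (t_out - t_in) = PI.
Proof. unfold t_out. field. lra. Qed.

Lemma capsule_junctions :
  ceval descent t_in = ceval cap t_in /\ ceval (cvel descent) t_in = ceval (cvel cap) t_in /\
  ceval cap t_out = ceval ascent t_out /\ ceval (cvel cap) t_out = ceval (cvel ascent) t_out.
Proof.
  assert (Eout : phi_out + W * t_out = phi_in + PI) by (unfold phi_out; ring).
  unfold ceval, cvel, descent, cap, ascent, helix, weval, wderiv; cbn [wx wy wz wcos wsin wconst wlin wphase wfreq].
  rewrite !cap_angle_in, Rminus_diag, cap_angle_out, Rmult_0_r, Eout.
  fold phi_in; rewrite cos_0, sin_0, cos_PI, sin_PI, neg_cos, neg_sin.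
  repeat split; f_equal; unfold t_in; field; lra.
Qed.

Lemma descent_height (s : R) : pz (ceval descent s) = t1 - V * s.
Proof. unfold ceval, weval; simpl. ring. Qed.

Lemma cap_height (s : R) : pz (ceval cap s) = - (V / L) * sin (L * (s - t_in)).
Proof. unfold ceval, weval; simpl. rewrite cap_angle_in. ring. Qed.

Lemma ascent_height (s : R) : pz (ceval ascent s) = V * (s - t_out).
Proof. unfold ceval, weval; simpl. ring. Qed.

Lemma helix_on_cylinder (c z0 vz s : R) :
  px (ceval (helix c z0 vz) s) ^ 2 + py (ceval (helix c z0 vz) s) ^ 2 = 1.
Proof. unfold ceval, weval; simpl. pose proof (cos_sin_sq (c + W * s)). nra. Qed.

Lemma helix_accel (l c z0 vz s : R) : forall proj, In proj comps ->
  proj (ceval (cvel (cvel (helix c z0 vz))) s)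
  = - (W * W) * proj (normal l PC (ceval (helix c z0 vz) s)).
Proof.
  intros proj [<- | [<- | [<- | []]]]; unfold ceval, cvel, weval, wderiv; simpl; ring.
Qed.

Section SpeedDecomposition.
Hypothesis HLVW : L * L = V * V + W * W.

(** The middle phase is a great circle of the unit sphere: [(cos phi_in, sin phi_in, 0)]
    and [(-W sin phi_in, W cos phi_in, -V) / L] are orthonormal. *)
Lemma cap_on_sphere (s : R) :
  px (ceval cap s) ^ 2 + py (ceval cap s) ^ 2 + pz (ceval cap s) ^ 2 = 1.
Proof.
  unfold ceval, weval; simpl.
  set (u := - (L * t_in) + L * s); set (w := W / L); set (v := V / L).
  assert (Hwv : w * w + v * v = 1).
  { unfold w, v. apply (Rmult_eq_reg_r (L * L)); [| nra]. field_simplify; lra. }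
  transitivity ((cos phi_in * cos phi_in + sin phi_in * sin phi_in) * (cos u * cos u)
    + ((cos phi_in * cos phi_in + sin phi_in * sin phi_in) * (w * w) + v * v) * (sin u * sin u));
    [ring |].
  rewrite cos_sin_sq, Rmult_1_l, Rmult_1_l, Hwv, Rmult_1_l. apply cos_sin_sq.
Qed.

Lemma helix_speed (c z0 vz s : R) : vz * vz = V * V ->
  px (ceval (cvel (helix c z0 vz)) s) ^ 2 + py (ceval (cvel (helix c z0 vz)) s) ^ 2
  + pz (ceval (cvel (helix c z0 vz)) s) ^ 2 = L ^ 2.
Proof.
  intros Hvz. unfold ceval, cvel, weval, wderiv; simpl.
  transitivity (W * W * (cos (c + W * s) * cos (c + W * s) + sin (c + W * s) * sin (c + W * s))
                + vz * vz); [ring |].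
  rewrite cos_sin_sq. lra.
Qed.

Lemma cap_speed (s : R) :
  px (ceval (cvel cap) s) ^ 2 + py (ceval (cvel cap) s) ^ 2 + pz (ceval (cvel cap) s) ^ 2 = L ^ 2.
Proof.
  unfold ceval, cvel, weval, wderiv; simpl.
  set (u := - (L * t_in) + L * s).
  transitivity ((cos phi_in * cos phi_in + sin phi_in * sin phi_in)
                  * (W * W * (cos u * cos u) + L * L * (sin u * sin u))
                + V * V * (cos u * cos u)); [field; lra |].
  rewrite cos_sin_sq.
  transitivity (L * L * (cos u * cos u + sin u * sin u)); [nra |].
  rewrite cos_sin_sq. ring.
Qed.

Lemma capsule_speed (s : R) :
  px (capsule_vel s) ^ 2 + py (capsule_vel s) ^ 2 + pz (capsule_vel s) ^ 2 = L ^ 2.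
Proof.
  unfold capsule_vel.
  destruct (Rle_or_lt s t_in) as [H1 | H1]; [| destruct (Rle_or_lt s t_out) as [H2 | H2]].
  - rewrite wpath_first by exact H1. apply helix_speed. ring.
  - rewrite wpath_middle by assumption. apply cap_speed.
  - rewrite wpath_last by (try apply t_in_lt_t_out; assumption). apply helix_speed. ring.
Qed.


Lemma cap_accel (l s : R) : forall proj, In proj comps ->
  proj (ceval (cvel (cvel cap)) s) = - (L * L) * proj (normal l PH0 (ceval cap s)).
Proof.
  intros proj [<- | [<- | [<- | []]]]; unfold ceval, cvel, weval, wderiv; simpl; ring.
Qed.

Section Endpoints.
Variables (l t2 : R).
Hypotheses (Ht1 : 0 < t1 < l) (Ht2 : 0 < t2 < l) (Hend : t_out + t2 / V = 1).

Lemma V_t_in : V * t_in = t1.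
Proof. unfold t_in; field; lra. Qed.

Lemma V_t_out : V * (1 - t_out) = t2.
Proof. replace (1 - t_out) with (t2 / V) by lra. field; lra. Qed.

Lemma capsule_times : 0 < t_in /\ t_in < t_out /\ t_out < 1.
Proof.
  pose proof V_t_in; pose proof V_t_out; pose proof t_in_lt_t_out.
  repeat split; nra.
Qed.

Lemma height_descent (s : R) : s <= t_in -> pz (capsule_path s) = t1 - V * s.
Proof. intros; unfold capsule_path; rewrite wpath_first by assumption; apply descent_height. Qed.

Lemma height_cap (s : R) : t_in < s <= t_out ->
  pz (capsule_path s) = - (V / L) * sin (L * (s - t_in)).
Proof. intros [? ?]; unfold capsule_path; rewrite wpath_middle by assumption; apply cap_height. Qed.

Lemma height_ascent (s : R) : t_out < s -> pz (capsule_path s) = V * (s - t_out).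
Proof.
  intros; unfold capsule_path; rewrite wpath_last by (try apply t_in_lt_t_out; assumption).
  apply ascent_height.
Qed.

Lemma cap_below_equator (s : R) : t_in < s < t_out -> pz (capsule_path s) < 0.
Proof.
  intros Hs. rewrite height_cap by lra.
  assert (0 < sin (L * (s - t_in))).
  { apply sin_gt_0; [apply Rmult_lt_0_compat; lra |].
    rewrite <- cap_angle_out. apply Rmult_lt_compat_l; lra. }
  assert (0 < V / L) by (apply Rdiv_lt_0_compat; assumption). nra.
Qed.

Lemma helices_inside_cylinder (s : R) :
  0 < s < t_in \/ t_out < s < 1 -> 0 < pz (capsule_path s) < l.
Proof.
  pose proof V_t_in; pose proof V_t_out.
  intros [Hs | Hs]; [rewrite height_descent by lra | rewrite height_ascent by lra]; nra.
Qed.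

Lemma capsule_in_N (s : R) : 0 <= s <= 1 -> in_N l (capsule_path s).
Proof.
  intros Hs. pose proof V_t_in; pose proof V_t_out; pose proof t_in_lt_t_out.
  unfold in_N, in_piece, capsule_path.
  destruct (Rle_or_lt s t_in) as [Hs1 | Hs1]; [| destruct (Rle_or_lt s t_out) as [Hs2 | Hs2]].
  - left. rewrite wpath_first by exact Hs1.
    split; [apply helix_on_cylinder | rewrite descent_height; nra].
  - right; left. rewrite wpath_middle by assumption.
    split; [apply cap_on_sphere | rewrite cap_height].
    assert (0 <= sin (L * (s - t_in))).
    { apply sin_ge_0; [nra | rewrite <- cap_angle_out; nra]. }
    assert (0 < V / L) by (apply Rdiv_lt_0_compat; assumption). nra.
  - left. rewrite wpath_last by assumption.
    split; [apply helix_on_cylinder | rewrite ascent_height; nra].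
Qed.

(** On an open time interval inside a single piece the path cannot cross a
    junction, because the piece changes there. *)
Lemma piece_interval_avoids_junctions (P : piece) (a b : R) :
  (forall t, a < t < b -> in_piece l P (capsule_path t)) ->
  ~ (a < t_in < b) /\ ~ (a < t_out < b).
Proof.
  intros Hin. destruct capsule_times as (Hin0 & Hinout & Hout1).
  assert (Hl : 0 < l) by lra.
  split; intros Hj.
  - destruct (straddle a b 0 t_in t_out) as (t & t' & Ht & Htc & Ht' & Ht'c); [lra | exact Hj |].
    assert (E1 := piece_of_cylinder_interior _ _ _ (helices_inside_cylinder t (or_introl Htc)) (Hin t Ht)).
    assert (E2 := piece_below_equator _ _ _ Hl (cap_below_equator t' Ht'c) (Hin t' Ht')).
    congruence.
  - destruct (straddle a b t_in t_out 1) as (t & t' & Ht & Htc & Ht' & Ht'c); [lra | exact Hj |].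
    assert (E1 := piece_below_equator _ _ _ Hl (cap_below_equator t Htc) (Hin t Ht)).
    assert (E2 := piece_of_cylinder_interior _ _ _ (helices_inside_cylinder t' (or_intror Ht'c)) (Hin t' Ht')).
    congruence.
Qed.

Lemma capsule_accel_normal (P : piece) (a b : R) : 0 <= a -> b <= 1 ->
  (forall t, a < t < b -> in_piece l P (capsule_path t)) ->
  forall t, a < t < b ->
  exists acc : pt,
    (forall proj, In proj comps -> derivable_pt_lim (fun s => proj (capsule_vel s)) t (proj acc)) /\
    exists lam : R, forall proj, In proj comps -> proj acc = lam * proj (normal l P (capsule_path t)).
Proof.
  intros Ha Hb Hin t Ht. destruct capsule_times as (Hin0 & Hinout & Hout1).
  destruct (piece_interval_avoids_junctions P a b Hin) as [Nin Nout].
  assert (Hta : t <> t_in) by (intros ->; tauto).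
  assert (Htb : t <> t_out) by (intros ->; tauto).
  exists (wpath t_in t_out (cvel (cvel descent)) (cvel (cvel cap)) (cvel (cvel ascent)) t).
  split; [exact (wpath_accel _ _ _ _ _ t Hta Htb) |].
  pose proof (Hin t Ht) as HP. assert (Hl : 0 < l) by lra.
  destruct (Rlt_or_le t t_in) as [H1 | H1]; [| destruct (Rlt_or_le t t_out) as [H2 | H2]].
  - assert (Hz : 0 < pz (capsule_path t) < l) by (apply helices_inside_cylinder; lra).
    rewrite (piece_of_cylinder_interior _ _ _ Hz HP). exists (- (W * W)).
    unfold capsule_path; rewrite !wpath_first by lra. apply helix_accel.
  - assert (Hz : pz (capsule_path t) < 0) by (apply cap_below_equator; lra).
    rewrite (piece_below_equator _ _ _ Hl Hz HP). exists (- (L * L)).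
    unfold capsule_path; rewrite !wpath_middle by lra. apply cap_accel.
  - assert (Hz : 0 < pz (capsule_path t) < l) by (apply helices_inside_cylinder; lra).
    rewrite (piece_of_cylinder_interior _ _ _ Hz HP). exists (- (W * W)).
    unfold capsule_path; rewrite !wpath_last by lra. apply helix_accel.
Qed.

Lemma capsule_is_geodesic : is_geodesic l capsule_path.
Proof.
  split; [exact capsule_in_N |].
  destruct capsule_junctions as (J1 & J1' & J2 & J2').
  exists capsule_vel; split; [| split].
  - intros proj Hproj.
    destruct (wpath_C1 _ _ _ _ _ t_in_lt_t_out J1 J1' J2 J2' proj Hproj) as [Hd Hc].
    split; [apply derivable_has_deriv_on, Hd | apply cont_at_cont_on, Hc].
  - exists L; split; [exact HL | intros t _; apply capsule_speed].
  - intros P a b Ha Hab Hb Hin. exact (capsule_accel_normal P a b Ha Hb Hin).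
Qed.

Lemma capsule_start : capsule_path 0 = cyl_pt t1 th1.
Proof.
  destruct capsule_times as (Hin0 & _ & _).
  unfold capsule_path; rewrite wpath_first by lra.
  unfold ceval, cyl_pt, weval; simpl. replace (th1 + W * 0) with th1 by ring. f_equal; ring.
Qed.

(** It ends at [(t2, th2)] when the total winding [W (t_in + t2 / V)] of the two
    helices, plus the half turn of the cap, is [th2 - th1] modulo [2 PI]. *)
Lemma capsule_end (th2 : R) (k : nat) :
  W * (t_in + t2 / V) = th2 - th1 - PI + 2 * INR k * PI ->
  capsule_path 1 = cyl_pt t2 th2.
Proof.
  intros Hwind. destruct capsule_times as (_ & Hinout & Hout1).
  assert (Hangle : phi_out + W * 1 = th2 + 2 * INR k * PI).
  { unfold phi_out, phi_in. replace t_out with (1 - t2 / V) by lra. lra. }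
  unfold capsule_path; rewrite wpath_last by lra.
  unfold ceval, cyl_pt, ascent, helix, weval; simpl.
  rewrite Hangle, cos_period, sin_period. f_equal; try ring.
  rewrite <- V_t_out. ring.
Qed.

(** The time budget: descent, cap and ascent take times [t1/V], [PI/L], [t2/V]. *)
Lemma V_split : V = t1 + t2 + PI * V / L.
Proof.
  rewrite <- V_t_in, <- V_t_out. unfold t_out. field. lra.
Qed.

Lemma midpoint_height_equal : t1 = t2 -> pz (capsule_path (1 / 2)) = - (V / L).
Proof.
  intros E. pose proof V_split as HV2. pose proof V_t_in. pose proof t_in_lt_t_out.
  assert (Hmid : L * (1 / 2 - t_in) = PI / 2).
  { apply (Rmult_eq_reg_l (V / L)); [| apply Rgt_not_eq, Rdiv_lt_0_compat; lra].
    replace (V / L * (L * (1 / 2 - t_in))) with (V / 2 - V * t_in) by (field; lra).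
    replace (V / L * (PI / 2)) with (PI * V / L / 2) by (field; lra). lra. }
  rewrite height_cap; [rewrite Hmid, sin_PI2; ring |].
  pose proof cap_angle_out; pose proof PI_RGT_0. split; nra.
Qed.

Lemma midpoint_height_descent : t2 + PI * V / L < t1 -> pz (capsule_path (1 / 2)) = t1 - V / 2.
Proof.
  intros Hgt. pose proof V_split; pose proof V_t_in.
  rewrite height_descent; [field |]. nra.
Qed.

Lemma midpoint_height_ascent : t1 + PI * V / L < t2 -> pz (capsule_path (1 / 2)) = t2 - V / 2.
Proof.
  intros Hgt. pose proof V_split; pose proof V_t_out.
  rewrite height_ascent; [| nra]. lra.
Qed.

End Endpoints.
End SpeedDecomposition.

End CapsulePath.

(** * The family of capsule geodesics between two points of the cylinder *)

(** For a helix slope [m] (angular over vertical speed), take the cap speed ratio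
    [q = sqrt (1 + m^2)] and the vertical speed [V] making the total time [1]. *)
Definition cap_ratio (m : R) : R := sqrt (1 + m * m).
Definition vert_speed (t1 t2 m : R) : R := t1 + t2 + PI / cap_ratio m.

Definition capsule_geodesic (th1 t1 t2 m : R) : R -> pt :=
  capsule_path th1 t1 (m * vert_speed t1 t2 m) (vert_speed t1 t2 m)
    (cap_ratio m * vert_speed t1 t2 m).

Lemma cap_ratio_gt (m : R) : 0 <= m -> m < cap_ratio m.
Proof.
  intros Hm. unfold cap_ratio. rewrite <- (sqrt_square m) at 1 by exact Hm.
  apply sqrt_lt_1; nra.
Qed.

Lemma cap_ratio_pos (m : R) : 0 < cap_ratio m.
Proof. unfold cap_ratio. apply sqrt_lt_R0. nra. Qed.

Lemma cap_ratio_increasing (m m' : R) : 0 <= m -> m < m' -> cap_ratio m < cap_ratio m'.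
Proof. intros. unfold cap_ratio. apply sqrt_lt_1; nra. Qed.

Section Family.
Variables (t1 t2 m : R).
Hypotheses (Ht1 : 0 < t1) (Ht2 : 0 < t2).

Lemma capsule_constraints :
  let V := vert_speed t1 t2 m in let L := cap_ratio m * V in
  0 < V /\ 0 < L /\ L * L = V * V + (m * V) * (m * V) /\ t_out t1 V L + t2 / V = 1.
Proof.
  intros V L. pose proof (cap_ratio_pos m) as Hq.
  assert (HV : 0 < V) by (unfold V, vert_speed; pose proof (Rdiv_lt_0_compat PI _ PI_RGT_0 Hq); lra).
  assert (Hq2 : cap_ratio m * cap_ratio m = 1 + m * m) by (apply sqrt_sqrt; nra).
  repeat split; [exact HV | unfold L; nra | | ].
  - unfold L. transitivity (cap_ratio m * cap_ratio m * (V * V)); [ring | rewrite Hq2; ring].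
  - unfold t_out, t_in, L. apply (Rmult_eq_reg_l V); [| lra].
    transitivity (t1 + t2 + PI / cap_ratio m); [field; lra | unfold V, vert_speed; ring].
Qed.

Lemma capsule_geodesic_in_G (l th1 th2 : R) (k : nat) : t1 < l -> t2 < l ->
  m * (t1 + t2) = th2 - th1 - PI + 2 * INR k * PI ->
  in_G l (cyl_pt t1 th1) (cyl_pt t2 th2) (capsule_geodesic th1 t1 t2 m).
Proof.
  intros Hl1 Hl2 Hwind. destruct capsule_constraints as (HV & HL & HLVW & Hend).
  assert (Ht1l : 0 < t1 < l) by lra; assert (Ht2l : 0 < t2 < l) by lra.
  split; [| split].
  - exact (capsule_is_geodesic _ _ _ _ _ HV HL HLVW l t2 Ht1l Ht2l Hend).
  - exact (capsule_start _ _ _ _ _ HV HL l t2 Ht1l Ht2l Hend).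
  - apply (capsule_end _ _ _ _ _ HV HL l t2 Ht1l Ht2l Hend th2 k).
    rewrite <- Hwind. unfold t_in. field. lra.
Qed.

Lemma capsule_midpoint_equal (th1 : R) : t1 = t2 ->
  pz (capsule_geodesic th1 t1 t2 m (1 / 2)) = - (1 / cap_ratio m).
Proof.
  intros E. destruct capsule_constraints as (HV & HL & _ & Hend).
  unfold capsule_geodesic. rewrite (midpoint_height_equal _ _ _ _ _ HV HL t2 Hend E).
  pose proof (cap_ratio_pos m). field. lra.
Qed.

Lemma capsule_midpoint_unequal (th1 : R) : PI < Rabs (t1 - t2) * cap_ratio m ->
  pz (capsule_geodesic th1 t1 t2 m (1 / 2)) = Rabs (t1 - t2) / 2 - (PI / 2) / cap_ratio m.
Proof.
  intros Hfar. destruct capsule_constraints as (HV & HL & _ & Hend).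
  pose proof (cap_ratio_pos m) as Hq. unfold capsule_geodesic.
  set (V := vert_speed t1 t2 m) in *.
  assert (Hsep : PI * V / (cap_ratio m * V) < Rabs (t1 - t2)).
  { replace (PI * V / (cap_ratio m * V)) with (PI / cap_ratio m) by (field; lra).
    apply (Rmult_lt_reg_r (cap_ratio m)); [exact Hq |].
    replace (PI / cap_ratio m * cap_ratio m) with PI by (field; lra). exact Hfar. }
  destruct (Rle_or_lt t2 t1) as [Hle | Hlt].
  - rewrite Rabs_right in * by lra.
    rewrite (midpoint_height_descent _ _ _ _ _ HV HL t2 Hend) by lra.
    unfold V, vert_speed. field. lra.
  - rewrite Rabs_left in * by lra.
    rewrite (midpoint_height_ascent _ _ _ _ _ HV HL t2 Hend) by lra.
    unfold V, vert_speed. field. lra.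
Qed.
End Family.

Lemma capsule_midpoint_profile (t1 t2 : R) : 0 < t1 -> 0 < t2 ->
  exists C D Q, 0 < D /\ 0 <= Q /\
    forall th1 m, Q < m -> pz (capsule_geodesic th1 t1 t2 m (1 / 2)) = C - D / cap_ratio m.
Proof.
  intros Ht1 Ht2. destruct (Req_dec t1 t2) as [E | Hne].
  - exists 0, 1, 0. repeat split; [lra | lra |]. intros th1 m _.
    rewrite capsule_midpoint_equal by assumption. ring.
  - assert (Hd : 0 < Rabs (t1 - t2)) by (apply Rabs_pos_lt; lra).
    assert (HQ : 0 < PI / Rabs (t1 - t2)) by (apply Rdiv_lt_0_compat; [apply PI_RGT_0 | exact Hd]).
    exists (Rabs (t1 - t2) / 2), (PI / 2), (PI / Rabs (t1 - t2)).
    repeat split; [pose proof PI_RGT_0; lra | lra |]. intros th1 m Hm.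
    apply capsule_midpoint_unequal; [assumption | assumption |].
    pose proof (cap_ratio_gt m ltac:(lra)).
    apply (Rmult_lt_reg_r (/ Rabs (t1 - t2))); [apply Rinv_0_lt_compat, Hd |].
    replace (Rabs (t1 - t2) * cap_ratio m * / Rabs (t1 - t2)) with (cap_ratio m) by (field; lra).
    unfold Rdiv in Hm. lra.
Qed.

Lemma profile_increasing (C D m m' : R) : 0 < D -> 0 <= m -> m < m' ->
  C - D / cap_ratio m < C - D / cap_ratio m'.
Proof.
  intros HD Hm Hmm'. pose proof (cap_ratio_pos m). pose proof (cap_ratio_increasing m m' Hm Hmm').
  assert (D / cap_ratio m' < D / cap_ratio m); [| lra].
  apply Rmult_lt_compat_l; [exact HD |]. apply Rinv_lt_contravar; nra.
Qed.

(** The slopes of the helices for the winding numbers [k] allowed by the endpoints. *)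
Definition winding_slope (th1 th2 t1 t2 : R) (k : nat) : R :=
  (th2 - th1 - PI + 2 * INR k * PI) / (t1 + t2).

Lemma winding_slope_spec (th1 th2 t1 t2 : R) (k : nat) : 0 < t1 + t2 ->
  winding_slope th1 th2 t1 t2 k * (t1 + t2) = th2 - th1 - PI + 2 * INR k * PI.
Proof. intros. unfold winding_slope. field. lra. Qed.

Lemma winding_slope_eventually_above (th1 th2 t1 t2 Q : R) : 0 < t1 + t2 ->
  exists K, forall n, Q < winding_slope th1 th2 t1 t2 (K + n).
Proof.
  intros Ht. pose proof PI_RGT_0.
  destruct (INR_unbounded ((Q * (t1 + t2) - (th2 - th1 - PI)) / (2 * PI))) as [K HK].
  exists K; intros n. unfold winding_slope. rewrite plus_INR.
  apply (Rmult_lt_reg_r (t1 + t2)); [exact Ht |].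
  replace ((th2 - th1 - PI + 2 * (INR K + INR n) * PI) / (t1 + t2) * (t1 + t2))
    with (th2 - th1 - PI + 2 * (INR K + INR n) * PI) by (field; lra).
  apply (Rmult_lt_compat_r (2 * PI)) in HK; [| lra].
  replace ((Q * (t1 + t2) - (th2 - th1 - PI)) / (2 * PI) * (2 * PI))
    with (Q * (t1 + t2) - (th2 - th1 - PI)) in HK by (field; lra).
  pose proof (pos_INR n). nra.
Qed.

Lemma winding_slope_increasing (th1 th2 t1 t2 : R) (k k' : nat) : 0 < t1 + t2 -> (k < k')%nat ->
  winding_slope th1 th2 t1 t2 k < winding_slope th1 th2 t1 t2 k'.
Proof.
  intros Ht Hk. unfold winding_slope. apply Rmult_lt_compat_r; [apply Rinv_0_lt_compat, Ht |].
  apply lt_INR in Hk. pose proof PI_RGT_0. nra.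
Qed.

Lemma injective_not_in_list {A : Type} (f : nat -> A) (B : list A) :
  (forall n n', f n = f n' -> n = n') -> ~ (forall n, In (f n) B).
Proof.
  intros Hinj Hin.
  assert (Hnd : NoDup (map f (seq 0 (S (length B))))).
  { apply FinFun.Injective_map_NoDup; [intros n n'; apply Hinj | apply seq_NoDup]. }
  assert (Hincl : incl (map f (seq 0 (S (length B)))) B).
  { intros y Hy. apply in_map_iff in Hy as [n [<- _]]. apply Hin. }
  apply (NoDup_incl_length Hnd) in Hincl.
  rewrite length_map, length_seq in Hincl. lia.
Qed.

Lemma strictly_increasing_injective (u : nat -> R) :
  (forall n n', (n < n')%nat -> u n < u n') -> forall n n', u n = u n' -> n = n'.
Proof.
  intros Hu n n' E. destruct (Nat.lt_total n n') as [H | [H | H]]; [| exact H |];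
    apply Hu in H; lra.
Qed.

Theorem lemma4 (l : R) (hl : 0 < l) (t1 th1 t2 th2 : R) :
  0 < t1 < l -> 0 < t2 < l ->
  ~ midpoint_secure l (cyl_pt t1 th1) (cyl_pt t2 th2).
Proof.
  intros [Ht1 Hl1] [Ht2 Hl2] [B HB].
  assert (Ht : 0 < t1 + t2) by lra.
  destruct (capsule_midpoint_profile t1 t2 Ht1 Ht2) as (C & D & Q & HD & HQ & Hmid).
  destruct (winding_slope_eventually_above th1 th2 t1 t2 Q Ht) as [K HK].
  set (mid n := capsule_geodesic th1 t1 t2 (winding_slope th1 th2 t1 t2 (K + n)) (1 / 2)).
  apply (injective_not_in_list mid B).
  - intros n n' E. apply (strictly_increasing_injective (fun n => pz (mid n)));
      [| cbv beta; rewrite E; reflexivity].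
    intros i j Hij. unfold mid; rewrite !Hmid by apply HK.
    apply profile_increasing; [exact HD | pose proof (HK i); lra |].
    apply winding_slope_increasing; [exact Ht | lia].
  - intros n. apply HB, (capsule_geodesic_in_G _ _ _ Ht1 Ht2 l th1 th2 (K + n) Hl1 Hl2).
    apply winding_slope_spec, Ht.
Qed.
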